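(* Assume $\mathcal{Z}$ is norm-Euclidean. Then for every $m\ge1$, $\sigma(m):=\sup_{|s|=m}\operatorname{diam}C_s\le2\operatorname{rad}(K)^{2m+1}$; in particular $\sigma(m)\to0$ as $m\to\infty$.
   Context: $X=\mathbb{R}^d$ (including $\mathbb{C},\mathbb{H},\mathbb{O}$ as $\mathbb{R}^2,\mathbb{R}^4,\mathbb{R}^8$) with Euclidean norm and distance $d$. $\iota:X\setminus\{0\}\to X\setminus\{0\}$ satisfies $|\iota x|=1/|x|$, $d(\iota x,\iota y)=d(x,y)/(|x||y|)$ and $\iota\circ\iota=\mathrm{id}$; $\iota(0)=0$. $\mathcal{Z}$ is a discrete additive subgroup with compact quotient, $K=\{x:d(x,0)\le d(x,z)\ \forall z\in\mathcal{Z}\}$ its Dirichlet region with a boundary choice so each $x$ has a unique $[x]\in\mathcal{Z}$ with $x-[x]\in K$; $\operatorname{rad}(K)=\sup_{x\in K}|x|$, and norm-Euclidean means $\operatorname{rad}(K)<1$. $Tx=\iota x-[\iota x]$ ($x\ne0$), $T0=0$. Cylinders: $C_\emptyset=K$, $C_{as}=K\cap\iota(C_s+a)$ for $a\in\mathcal{Z}$; the supremum is over digit strings $s$ of length $m$ (with $\operatorname{diam}\emptyset=0$). *)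

(* X = R^d is 'rV[R]_d with the Euclidean norm. *)
From mathcomp Require Import all_boot all_order all_algebra.
From mathcomp Require Import all_classical all_reals all_analysis.
Set Implicit Arguments. Unset Strict Implicit. Unset Printing Implicit Defensive.
Import Order.TTheory GRing.Theory Num.Theory.
Local Open Scope classical_set_scope.
Local Open Scope ring_scope.

Definition eucl_norm {R : realType} {d : nat} (x : 'rV[R]_d) : R :=
  Num.sqrt (\sum_(i < d) (x ord0 i) ^+ 2).
Definition eucl_dist {R : realType} {d : nat} (x y : 'rV[R]_d) : R := eucl_norm (x - y).

Definition dirichlet {R : realType} {d : nat} (Z : set 'rV[R]_d) : set 'rV[R]_d :=
  [set x | forall z, Z z -> eucl_dist x 0 <= eucl_dist x z].

Definition rad_of {R : realType} {d : nat} (K : set 'rV[R]_d) : R :=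
  sup [set eucl_norm x | x in K].

Definition diam_of {R : realType} {d : nat} (C : set 'rV[R]_d) : R :=
  if pselect (C = set0) then 0 else sup [set eucl_dist x y | x in C & y in C].

Fixpoint cyl {R : realType} {d : nat} (iota : 'rV[R]_d -> 'rV[R]_d)
  (K : set 'rV[R]_d) (s : seq 'rV[R]_d) : set 'rV[R]_d :=
  match s with
  | [::] => K
  | a :: s' => K `&` (iota @` [set y + a | y in cyl iota K s'])
  end.

Definition sigma_of {R : realType} {d : nat} (iota : 'rV[R]_d -> 'rV[R]_d)
  (Z K : set 'rV[R]_d) (m : nat) : R :=
  sup [set diam_of (cyl iota K s) | s in
        [set s : seq 'rV[R]_d | size s = m /\ (forall a, a \in s -> Z a)]].

From mathcomp Require Import all_boot all_order all_algebra.
From mathcomp Require Import all_classical all_reals all_analysis.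
From mathcomp Require Import ring lra zify.
Import Order.TTheory GRing.Theory Num.Theory numFieldNormedType.Exports.
Set Implicit Arguments. Unset Strict Implicit. Unset Printing Implicit Defensive.
Local Open Scope classical_set_scope.
Local Open Scope ring_scope.

(* Every point of K has norm at most r = rad K.  For points whose images have
   norm at most r the inversion contracts distances by r^2, because
   d(iota u, iota v) = d(u, v) |iota u| |iota v|, while |iota v| |v| = 1 takes
   care of the case u = 0.  Since C_(a s) is the image under iota of the
   translate C_s + a, induction from diam K <= 2 r gives
   diam C_s <= 2 r^(2 |s| + 1), which tends to 0 because r < 1.  Cocompactness
   of Z is used only to bound K. *)

Section EuclideanNorm.
Variables (R : realType) (d : nat).
Implicit Types x y a : 'rV[R]_d.

Definition eucl_dot x y : R := \sum_(i < d) x ord0 i * y ord0 i.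

Lemma eucl_normE x : eucl_norm x = Num.sqrt (eucl_dot x x).
Proof. by congr Num.sqrt; apply: eq_bigr => i _; rewrite expr2. Qed.

Lemma eucl_dotxx_ge0 x : 0 <= eucl_dot x x.
Proof. by apply: sumr_ge0 => i _; rewrite -expr2 sqr_ge0. Qed.

Lemma eucl_norm_ge0 x : 0 <= eucl_norm x.
Proof. exact: sqrtr_ge0. Qed.

Lemma sqr_eucl_norm x : eucl_norm x ^+ 2 = eucl_dot x x.
Proof. by rewrite eucl_normE sqr_sqrtr ?eucl_dotxx_ge0. Qed.

Lemma eucl_norm0 : eucl_norm (0 : 'rV[R]_d) = 0.
Proof. by rewrite /eucl_norm big1 ?sqrtr0 // => i _; rewrite mxE expr0n. Qed.

Lemma eucl_norm_eq0 x : (eucl_norm x == 0) = (x == 0).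
Proof.
apply/idP/eqP => [|->]; last by rewrite eucl_norm0.
rewrite sqrtr_eq0 => sum_le0.
have /eqP sum_eq0 : \sum_(i < d) x ord0 i ^+ 2 == 0.
  by rewrite eq_le sum_le0 sumr_ge0 // => i _; rewrite sqr_ge0.
apply/rowP => i; rewrite mxE.
by move/psumr_eq0P: sum_eq0 => /(_ (fun j _ => sqr_ge0 _) i isT) /eqP;
  rewrite sqrf_eq0 => /eqP.
Qed.

Lemma eucl_normN x : eucl_norm (- x) = eucl_norm x.
Proof. by congr Num.sqrt; apply: eq_bigr => i _; rewrite mxE sqrrN. Qed.

(* Lagrange's identity:
   2 (<x,x> <y,y> - <x,y>^2) = sum_(i,j) (x_i y_j - x_j y_i)^2. *)
Lemma eucl_dot_sqr_le x y : eucl_dot x y ^+ 2 <= eucl_dot x x * eucl_dot y y.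
Proof.
pose A i j := (x ord0 i * y ord0 j) ^+ 2.
pose B i j := x ord0 i * y ord0 i * (x ord0 j * y ord0 j).
have dotxx_dotyy : eucl_dot x x * eucl_dot y y = \sum_(i < d) \sum_(j < d) A i j.
  rewrite /eucl_dot mulr_suml; apply: eq_bigr => i _.
  by rewrite mulr_sumr; apply: eq_bigr => j _; rewrite /A; ring.
have dotxy2 : eucl_dot x y ^+ 2 = \sum_(i < d) \sum_(j < d) B i j.
  by rewrite expr2 /eucl_dot mulr_suml; apply: eq_bigr => i _; rewrite mulr_sumr.
have lagrange :
    \sum_(i < d) \sum_(j < d) (x ord0 i * y ord0 j - x ord0 j * y ord0 i) ^+ 2
    = 2 * (\sum_(i < d) \sum_(j < d) A i j - \sum_(i < d) \sum_(j < d) B i j).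
  transitivity (\sum_(i < d) \sum_(j < d) A i j + \sum_(i < d) \sum_(j < d) A j i
                - 2 * \sum_(i < d) \sum_(j < d) B i j).
    rewrite mulr_sumr -sumrN -!big_split /=; apply: eq_bigr => i _.
    rewrite mulr_sumr -sumrN -!big_split /=; apply: eq_bigr => j _.
    by rewrite /A /B; ring.
  by rewrite [X in _ + X - _]exchange_big /=; ring.
have : 0 <= \sum_(i < d) \sum_(j < d) (x ord0 i * y ord0 j - x ord0 j * y ord0 i) ^+ 2.
  by apply: sumr_ge0 => i _; apply: sumr_ge0 => j _; rewrite sqr_ge0.
by rewrite lagrange dotxx_dotyy dotxy2 pmulr_rge0 ?ltr0n // subr_ge0.
Qed.

Lemma eucl_dot_le x y : eucl_dot x y <= eucl_norm x * eucl_norm y.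
Proof.
rewrite !eucl_normE -sqrtrM ?eucl_dotxx_ge0 // (le_trans (ler_norm _)) //.
rewrite -sqrtr_sqr ler_sqrt ?eucl_dot_sqr_le // mulr_ge0 ?eucl_dotxx_ge0 //.
Qed.

Lemma eucl_normD x y : eucl_norm (x + y) <= eucl_norm x + eucl_norm y.
Proof.
have dotDD : eucl_dot (x + y) (x + y) = eucl_dot x x + 2 * eucl_dot x y + eucl_dot y y.
  rewrite /eucl_dot mulr_sumr -!big_split /=; apply: eq_bigr => i _; rewrite mxE; ring.
have sum_ge0 : 0 <= eucl_norm x + eucl_norm y by rewrite addr_ge0 ?eucl_norm_ge0.
rewrite -(ger0_norm sum_ge0) -sqrtr_sqr eucl_normE ler_sqrt ?sqr_ge0 //.
rewrite dotDD sqrrD !sqr_eucl_norm; have := eucl_dot_le x y; lra.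
Qed.

Lemma eucl_dist_ge0 x y : 0 <= eucl_dist x y.
Proof. exact: eucl_norm_ge0. Qed.

Lemma eucl_dist0r x : eucl_dist x 0 = eucl_norm x.
Proof. by rewrite /eucl_dist subr0. Qed.

Lemma eucl_dist0l x : eucl_dist 0 x = eucl_norm x.
Proof. by rewrite /eucl_dist sub0r eucl_normN. Qed.

Lemma eucl_distDr a x y : eucl_dist (x + a) (y + a) = eucl_dist x y.
Proof. by rewrite /eucl_dist opprD addrACA subrr addr0. Qed.

Lemma eucl_dist_le_norm x y : eucl_dist x y <= eucl_norm x + eucl_norm y.
Proof. by rewrite /eucl_dist -(eucl_normN y) eucl_normD. Qed.

End EuclideanNorm.

Lemma sup_ge0_le (R : realType) (S : set R) (s D : R) :
  S s -> 0 <= s -> ubound S D -> 0 <= sup S <= D.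
Proof.
move=> Ss s_ge0 SD; apply/andP; split; last by apply: ge_sup => //; exists s.
by apply: le_trans s_ge0 _; apply: ub_le_sup => //; exists D.
Qed.

Lemma diam_of_ge0_le (R : realType) (d : nat) (C : set 'rV[R]_d) (D : R) :
  0 <= D -> (forall x y, C x -> C y -> eucl_dist x y <= D) ->
  0 <= diam_of C <= D.
Proof.
move=> D_ge0 CD; rewrite /diam_of.
destruct (pselect (C = set0)) as [C0|C_neq0]; first by rewrite lexx.
have /set0P[x Cx] : C != set0 by apply/eqP.
apply: (@sup_ge0_le _ _ (eucl_dist x x)).
- by exists x => //; exists x.
- exact: eucl_dist_ge0.
- by move=> _ [x1 Cx1 [x2 Cx2 <-]]; apply: CD.
Qed.

Lemma dirichlet_norm_le (R : realType) (d : nat) (Z : set 'rV[R]_d) (B : R) x :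
  (forall y, exists2 z, Z z & eucl_dist y z <= B) ->
  dirichlet Z x -> eucl_norm x <= B.
Proof.
move=> ZB Dx; have [z Zz xz_le] := ZB x.
by rewrite -eucl_dist0r (le_trans (Dx z Zz)).
Qed.

Lemma rad_of_ge_norm (R : realType) (d : nat) (K : set 'rV[R]_d) (B : R) x :
  (forall y, K y -> eucl_norm y <= B) -> K x -> eucl_norm x <= rad_of K.
Proof.
move=> KB Kx; apply: ub_le_sup; last by exists x.
by exists B => _ [y Ky <-]; apply: KB.
Qed.

Section Inversion.
Variables (R : realType) (d : nat) (iota : 'rV[R]_d -> 'rV[R]_d).
Hypothesis iota_norm : forall x, x != 0 -> eucl_norm (iota x) = 1 / eucl_norm x.
Hypothesis iota_dist : forall x y, x != 0 -> y != 0 ->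
  eucl_dist (iota x) (iota y) = eucl_dist x y / (eucl_norm x * eucl_norm y).
Hypothesis iota0 : iota 0 = 0.

Lemma iota_norm_mul x : x != 0 -> eucl_norm (iota x) * eucl_norm x = 1.
Proof. by move=> x_neq0; rewrite iota_norm // div1r mulVf ?eucl_norm_eq0. Qed.

Lemma iota_dist_le (r : R) u v : 0 <= r ->
  eucl_norm (iota u) <= r -> eucl_norm (iota v) <= r ->
  eucl_dist (iota u) (iota v) <= r ^+ 2 * eucl_dist u v.
Proof.
move=> r_ge0 iu_le iv_le.
have norm_le w : eucl_norm (iota w) <= r -> eucl_norm (iota w) <= r ^+ 2 * eucl_norm w.
  have [->|w_neq0] := eqVneq w 0; first by rewrite iota0 eucl_norm0 mulr0.
  move=> iw_le; have rw_ge1 : 1 <= r * eucl_norm w.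
    by rewrite -(iota_norm_mul w_neq0) ler_wpM2r ?eucl_norm_ge0.
  rewrite expr2 -mulrA (le_trans iw_le) // -[X in X <= _]mulr1.
  by rewrite ler_wpM2l.
have [->|u_neq0] := eqVneq u 0; first by rewrite iota0 !eucl_dist0l norm_le.
have [->|v_neq0] := eqVneq v 0; first by rewrite iota0 !eucl_dist0r norm_le.
have inv_norm w : w != 0 -> (eucl_norm w)^-1 = eucl_norm (iota w).
  by move=> w_neq0; rewrite iota_norm // div1r.
rewrite iota_dist // invfM !inv_norm // mulrC ler_wpM2r ?eucl_dist_ge0 //.
by rewrite expr2 ler_pM ?eucl_norm_ge0.
Qed.

Section Cylinders.
Variables (K : set 'rV[R]_d) (r : R).
Hypothesis r_ge0 : 0 <= r.
Hypothesis normK_le : forall x, K x -> eucl_norm x <= r.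

Lemma cyl_dist_le s x y : cyl iota K s x -> cyl iota K s y ->
  eucl_dist x y <= 2 * r ^+ (2 * size s + 1).
Proof.
elim: s x y => [|a s IH] x y /=.
  move=> Kx Ky; have := eucl_dist_le_norm x y.
  by have := normK_le Kx; have := normK_le Ky; rewrite expr1; lra.
move=> [Kx [_ [x' Cx' <-] iota_x]] [Ky [_ [y' Cy' <-] iota_y]].
rewrite -{}iota_x -{}iota_y in Kx Ky *.
have -> : 2 * r ^+ (2 * (size s).+1 + 1) = r ^+ 2 * (2 * r ^+ (2 * size s + 1)).
  by rewrite mulrCA -exprD; congr (_ * _ ^+ _); lia.
apply: le_trans (iota_dist_le r_ge0 (normK_le Kx) (normK_le Ky)) _.
by rewrite eucl_distDr ler_wpM2l ?exprn_ge0 ?IH.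
Qed.

Lemma diam_cyl_ge0_le s :
  0 <= diam_of (cyl iota K s) <= 2 * r ^+ (2 * size s + 1).
Proof.
apply: diam_of_ge0_le; last exact: cyl_dist_le.
by rewrite mulr_ge0 ?exprn_ge0.
Qed.

Lemma sigma_of_ge0_le (Z : set 'rV[R]_d) m : Z 0 ->
  0 <= sigma_of iota Z K m <= 2 * r ^+ (2 * m + 1).
Proof.
move=> Z0; apply: (@sup_ge0_le _ _ (diam_of (cyl iota K (nseq m 0)))).
- exists (nseq m 0) => //; split; first by rewrite size_nseq.
  by move=> a; rewrite mem_nseq => /andP[_ /eqP->].
- by have /andP[] := diam_cyl_ge0_le (nseq m 0).
- by move=> _ [s [<- _] <-]; have /andP[] := diam_cyl_ge0_le s.
Qed.

End Cylinders.
End Inversion.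

Lemma cvg_odd_expr0 (R : realType) (c r : R) : `|r| < 1 ->
  c * r ^+ (2 * m + 1) @[m --> \oo] --> 0.
Proof.
move=> r_lt1.
have -> : (fun m => c * r ^+ (2 * m + 1)) = (fun m => c * r * (r ^+ 2) ^+ m).
  by apply/funext => m; rewrite exprD exprM expr1 mulrAC mulrA.
rewrite -(mulr0 (c * r)); apply: cvgMl_tmp; apply: cvg_expr.
by rewrite normrX exprn_ilt1.
Qed.

Theorem lemma4p5 (R : realType) (d : nat)
  (iota : 'rV[R]_d -> 'rV[R]_d) (Z K : set 'rV[R]_d) (fl : 'rV[R]_d -> 'rV[R]_d)
  (* the inversion iota *)
  (Hiota_norm : forall x, x != 0 -> eucl_norm (iota x) = 1 / eucl_norm x)
  (Hiota_dist : forall x y, x != 0 -> y != 0 ->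
      eucl_dist (iota x) (iota y) = eucl_dist x y / (eucl_norm x * eucl_norm y))
  (Hiota_inv : forall x, x != 0 -> iota (iota x) = x)
  (Hiota0 : iota 0 = 0)
  (* Z is an additive subgroup *)
  (HZ0 : Z 0) (HZsub : forall a b, Z a -> Z b -> Z (a - b))
  (* Z is discrete *)
  (HZdisc : exists2 r : R, 0 < r & forall z, Z z -> z != 0 -> r <= eucl_norm z)
  (* X / Z is compact: Z has a bounded fundamental set *)
  (HZcocpt : exists B : R, forall x, exists2 z, Z z & eucl_dist x z <= B)
  (* K is the Dirichlet region with a boundary choice; fl x = [x] *)
  (HKsub : K `<=` dirichlet Z)
  (Hfl : forall x, Z (fl x) /\ K (x - fl x) /\
            (forall z, Z z -> K (x - z) -> z = fl x))
  (* norm-Euclidean *)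
  (HnE : rad_of K < 1) :
  (forall m : nat, (1 <= m)%N -> sigma_of iota Z K m <= 2 * rad_of K ^+ (2 * m + 1)) /\
  (sigma_of iota Z K m @[m --> \oo] --> 0).
Proof.
have [B ZB] := HZcocpt.
have KB x (Kx : K x) : eucl_norm x <= B := dirichlet_norm_le ZB (HKsub _ Kx).
have normK_le x (Kx : K x) : eucl_norm x <= rad_of K := rad_of_ge_norm KB Kx.
have K_fl0 : K (0 - fl 0) by have [_ []] := Hfl 0.
have rad_ge0 : 0 <= rad_of K := le_trans (eucl_norm_ge0 _) (normK_le _ K_fl0).
have sigma_bound m := sigma_of_ge0_le Hiota_norm Hiota_dist Hiota0 rad_ge0 normK_le m HZ0.
split=> [m _|]; first by have /andP[] := sigma_bound m.
have rad_lt1 : `|rad_of K| < 1 by rewrite ger0_norm.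
apply: (squeeze_cvgr _ (cvg_cst 0) (cvg_odd_expr0 2 rad_lt1)).
by near=> m; apply: sigma_bound.
Unshelve. all: by end_near.
Qed.
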